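(* Let $\ell\geq 2$ be an integer. Then $\mathbb{O}_2(\ell,\mathbb{Q})\neq\emptyset$ if and only if the factorization of $\ell$ into powers of distinct primes is of the form $\ell=p_1^{k_1}\cdots p_r^{k_r}$ with $p_i\equiv 1\bmod 4$ for every $i\leq r$. In that case, $\#\mathbb{O}_2(\ell,\mathbb{Q})=2^{r+3}$, where $r$ is the number of distinct prime factors of $\ell$.
   Context: The level of a rational matrix $Q$ is the least integer $\ell\geq 1$ with $\ell Q$ having integer entries. $\mathbb{O}_n(\ell,\mathbb{Q})$ denotes the set of all rational orthogonal $n\times n$ matrices with level $\ell$. *)

From mathcomp Require Import all_boot all_order all_algebra.
Set Implicit Arguments. Unset Strict Implicit. Unset Printing Implicit Defensive.
Import Order.TTheory GRing.Theory Num.Theory.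
Local Open Scope ring_scope.

Definition int_mx (m n : nat) (A : 'M[rat]_(m, n)) : Prop :=
  forall i j, A i j \is a Num.int.

Definition has_level (n : nat) (Q : 'M[rat]_n) (l : nat) : Prop :=
  (0 < l)%N /\ int_mx (l%:R *: Q) /\
  (forall m : nat, (0 < m)%N -> (m < l)%N -> ~ int_mx (m%:R *: Q)).

Definition orthogonal_mx (n : nat) (Q : 'M[rat]_n) : Prop :=
  Q *m Q^T = 1%:M.

Definition in_O (n l : nat) (Q : 'M[rat]_n) : Prop :=
  orthogonal_mx Q /\ has_level Q l.

(* An orthogonal 2x2 rational matrix of level l has the form
   (1/l) [X, -eY; Y, eX] with e = +-1, X^2 + Y^2 = l^2 and gcd(X, Y) = 1.
   Up to the four units of Z[i], such a pair (X, Y) has X > 0 and Y >= 0,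
   and then X / Y mod l^2 is a square root of -1 modulo l^2; this is a
   bijection onto all such square roots: injectivity comes from
   (XX' + YY')^2 + (XY' - X'Y)^2 = l^4, surjectivity from Thue's lemma.
   By the Chinese remainder theorem and Hensel lifting, -1 has 2^r square
   roots modulo l^2 when every prime factor of l is 1 mod 4, and none
   otherwise.  Hence #O_2(l, Q) = 2 * 4 * 2^r. *)

From mathcomp Require Import all_boot all_order all_algebra.
From mathcomp Require Import cyclic finfield zify ring.
Set Implicit Arguments. Unset Strict Implicit. Unset Printing Implicit Defensive.
Import Order.TTheory GRing.Theory Num.Theory.

(** * Square roots of -1 modulo n *)

Lemma coprime_sqrD1 d t : d %| t ^ 2 + 1 -> coprime d t.
Proof.
move=> dt; have g_t2 : gcdn d t %| t ^ 2 by rewrite dvdn_exp // dvdn_gcdr.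
by rewrite /coprime -dvdn1 -(dvdn_addr _ g_t2) (dvdn_trans (dvdn_gcdl d t)).
Qed.

Definition sqrtN1_mod (n : nat) : seq nat := [seq t <- iota 0 n | n %| t ^ 2 + 1].

Lemma sqrtN1_mod_uniq n : uniq (sqrtN1_mod n).
Proof. by rewrite filter_uniq ?iota_uniq. Qed.

Lemma mem_sqrtN1_mod n t : (t \in sqrtN1_mod n) = (t < n) && (n %| t ^ 2 + 1).
Proof. by rewrite mem_filter mem_iota add0n andbC. Qed.

Lemma dvdn_sqrD1_mod n t : (n %| t ^ 2 + 1) = (n %| (t %% n) ^ 2 + 1).
Proof. by rewrite /dvdn -[in RHS]modnDml modnXm modnDml. Qed.

Lemma size_sqrtN1_modM a b : coprime a b -> 0 < a -> 0 < b ->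
  size (sqrtN1_mod (a * b)) = size (sqrtN1_mod a) * size (sqrtN1_mod b).
Proof.
move=> co a0 b0.
rewrite -(size_allpairs pair) -(size_map (fun t => (t %% a, t %% b))).
apply: perm_size; apply: uniq_perm.
- rewrite map_inj_in_uniq ?sqrtN1_mod_uniq // => t t'.
  rewrite !mem_sqrtN1_mod => /andP[tl _] /andP[t'l _] [e1 e2].
  have: t == t' %[mod a * b] by rewrite chinese_remainder // e1 e2 !eqxx.
  by rewrite !modn_small // => /eqP.
- by apply: allpairs_uniq; rewrite ?sqrtN1_mod_uniq // => -[x y] [x' y'] _ _ /= [-> ->].
move=> [r s]; apply/mapP/allpairsP => [[t]|[[r' s']]] /=.
  rewrite mem_sqrtN1_mod => /andP[tl dv] [-> ->]; exists (t %% a, t %% b).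
  rewrite /= !mem_sqrtN1_mod !ltn_pmod // -!dvdn_sqrD1_mod.
  by split=> //=; [exact: dvdn_trans (dvdn_mulr b (dvdnn a)) dv
                  | exact: dvdn_trans (dvdn_mull a (dvdnn b)) dv].
rewrite /= !mem_sqrtN1_mod => -[/andP[ra da] /andP[sb db] [-> ->]].
pose c := chinese a b r' s' %% (a * b).
have ca : c %% a = r' by rewrite modn_dvdm ?dvdn_mulr // chinese_modl // modn_small.
have cb : c %% b = s' by rewrite modn_dvdm ?dvdn_mull // chinese_modr // modn_small.
exists c; last by rewrite ca cb.
rewrite mem_sqrtN1_mod ltn_pmod ?muln_gt0 ?a0 //= Gauss_dvd //.
by rewrite (dvdn_sqrD1_mod a) ca (dvdn_sqrD1_mod b) cb da db.
Qed.

Local Open Scope ring_scope.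

Lemma finField_sqrtN1 (F : finFieldType) :
  (2%:R : F) != 0 -> (exists z : F, z ^+ 2 = -1) <-> (#|F| %% 4 = 1)%N.
Proof.
move=> two_nz; have q1 := finNzRing_gt1 F.
split=> [[z z2]|q4].
  (* z has order 4, and its order divides q - 1 *)
  have z4 : z ^+ 4 = 1 by rewrite -[4%N]/(2 * 2)%N exprM z2 sqrrN expr1n.
  have [m zm m4] := prim_order_exists (isT : (0 < 4)%N) z4.
  have m_ndvd2 : ~~ (m %| 2)%N.
    by rewrite (prim_order_dvd zm) z2 eq_sym -addr_eq0 -(natrD F 1 1).
  have {m4 m_ndvd2} m_eq4 : m = 4%N by case: m {zm} m4 m_ndvd2 => [|[|[|[|[|]]]]].
  subst m.
  have z0 : z != 0 by apply: contra_eq_neq z2 => ->; rewrite expr0n eq_sym oppr_eq0 oner_eq0.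
  have /eqP : z ^+ #|F|.-1 = 1.
    by apply: (mulIf z0); rewrite mul1r -exprSr prednK ?expf_card // ltnW.
  rewrite -(prim_order_dvd zm) /dvdn => /eqP q4.
  by rewrite -(prednK (ltnW q1)) -addn1 -modnDml q4.
(* the q - 1 nonzero elements are (q - 1)-th roots of unity, so one of them is primitive *)
have q0 : (0 < #|F|.-1)%N by rewrite -ltnS prednK // ltnW.
pose rs := enum (predC1 (0 : F)).
have rs_roots : all (#|F|.-1).-unity_root rs.
  apply/allP => x; rewrite mem_enum /= => x0; apply/unity_rootP.
  by apply: (mulIf x0); rewrite mul1r -exprSr prednK ?expf_card // ltnW.
have := has_prim_root q0 rs_roots (enum_uniq _).
rewrite -cardE cardC1 leqnn => /(_ isT) /hasP[w _ wP].
have dv4 : (4 %| #|F|.-1)%N.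
  have -> : #|F|.-1 = (#|F| %/ 4 * 4)%N by rewrite {1}(divn_eq #|F| 4) q4 addn1.
  exact: dvdn_mull.
have zP := dvdn_prim_root wP dv4.
exists (w ^+ (#|F|.-1 %/ 4)); set z := w ^+ _ in zP *.
have : (z ^+ 2 - 1) * (z ^+ 2 + 1) == 0.
  by rewrite -subr_sqr expr1n -exprM (prim_expr_order zP) subrr.
rewrite mulf_eq0 subr_eq0 -(prim_order_dvd zP) addr_eq0 => /orP[//|/eqP //].
Qed.

Lemma prime_sqrtN1 p : prime p -> odd p -> (exists t, p %| t ^ 2 + 1)%N <-> (p %% 4 = 1)%N.
Proof.
move=> pP p_odd; have chF := pchar_Fp pP.
have two_nz : (2%:R : 'F_p) != 0 by rewrite -(dvdn_pcharf chF) -prime_coprime // coprimen2.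
rewrite -[X in (X %% 4)%N](card_Fp pP) -finField_sqrtN1 //.
split=> [[t]|[z z2]].
  by rewrite (dvdn_pcharf chF) natrD natrX addr_eq0 => /eqP z2; exists t%:R.
by exists z; rewrite (dvdn_pcharf chF) natrD natrX natr_Zp z2 addNr.
Qed.

Local Close Scope ring_scope.

Lemma sqrtN1_lift p k t : prime p -> odd p -> p ^ k.+1 %| t ^ 2 + 1 ->
  exists t', p ^ k.+2 %| t' ^ 2 + 1.
Proof.
move=> pP p_odd dv.
have cop : coprime p (2 * t).
  rewrite coprimeMr coprimen2 p_odd coprime_sqrD1 //.
  by apply: dvdn_trans dv; rewrite dvdn_exp.
have [a _ /dvdnP[c Ec]] := Bezoutl (2 * t) (prime_gt0 pP).
rewrite (eqnP cop) in Ec.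
have [q Eq] := dvdnP dv.
exists (t + q * a * p ^ k.+1).
have -> : (t + q * a * p ^ k.+1) ^ 2 + 1
   = (t ^ 2 + 1) + q * p ^ k.+1 * (a * (2 * t)) + (q * a * p ^ k.+1) ^ 2 by ring.
rewrite Eq -{1}[q * p ^ k.+1]muln1 -mulnDr Ec.
by apply/dvdnP; exists (q * c + q ^ 2 * a ^ 2 * p ^ k); rewrite !expnS; ring.
Qed.

Lemma sqrtN1_primeX p k : prime p -> p %% 4 = 1 -> exists t, p ^ k %| t ^ 2 + 1.
Proof.
move=> pP p4; have p_odd : odd p by rewrite (divn_eq p 4) p4 addn1 /= oddM andbF.
case: k => [|k]; first by exists 0; rewrite dvd1n.
elim: k => [|k [t IH]]; last exact: sqrtN1_lift IH.
by rewrite expn1 prime_sqrtN1.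
Qed.

Lemma sqrtN1_primeX_cases p k s t : prime p -> odd p ->
  s \in sqrtN1_mod (p ^ k) -> t \in sqrtN1_mod (p ^ k) -> (s == t) || (s + t == p ^ k).
Proof.
move=> pP p_odd; wlog st : s t / s <= t => [wlog|].
  by case/orP: (leq_total s t) => ?; [|rewrite eq_sym addnC => *]; apply: wlog.
rewrite !mem_sqrtN1_mod => /andP[sl ds] /andP[tl dt].
case: k sl tl ds dt => [|k]; first by rewrite expn0 !ltnS !leqn0 => /eqP-> /eqP->.
move=> sl tl ds dt.
have dst : p ^ k.+1 %| (t - s) * (t + s).
  by rewrite -subn_sqr -(subnDr 1) dvdn_sub.
have ps : coprime p s by apply: coprime_sqrD1 (dvdn_trans _ ds); rewrite dvdn_exp.
have p2 : ~~ (p %| 2) by rewrite -prime_coprime // coprimen2.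
have cop : coprime p (t + s) || coprime p (t - s).
  rewrite !prime_coprime // -negb_and; apply: contraL ps => /andP[d1 d2].
  have : p %| (t + s) - (t - s) by rewrite dvdn_sub.
  by rewrite subnBA // -addnA addKn addnn -mul2n Euclid_dvdM // (negbTE p2) prime_coprime ?negbK.
have {}dst : (p ^ k.+1 %| t - s) || (p ^ k.+1 %| t + s).
  case/orP: cop => /(coprimeXl k.+1) cop; first by rewrite -(@Gauss_dvdl _ (t - s) _ cop) dst.
  by rewrite -(@Gauss_dvdr _ _ (t + s) cop) dst orbT.
move: (p ^ k.+1) sl tl dst => P sl tl {ds dt}.
case/orP => [|/dvdnP[[|[|c]] Ec]]; first by rewrite /dvdn modn_small; lia.
- by lia.
- by lia.
- by move: Ec; rewrite !mulSn; lia.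
Qed.

Lemma dvdn_sqrD1_sub n t : t <= n -> n %| t ^ 2 + 1 -> n %| (n - t) ^ 2 + 1.
Proof.
move=> /subnK; set m := n - t => <- dt.
have E : m ^ 2 + 1 + (m + t) * (2 * t) = (t ^ 2 + 1) + (m + t) * (m + t) by ring.
by rewrite -(dvdn_addl _ (dvdn_mulr (2 * t) (dvdnn (m + t)))) E dvdn_addr ?dvdn_mulr.
Qed.

Lemma size_sqrtN1_primeX p k : prime p -> p %% 4 = 1 -> 0 < k ->
  size (sqrtN1_mod (p ^ k)) = 2.
Proof.
move=> pP p4 k0; have p_odd : odd p by rewrite (divn_eq p 4) p4 addn1 /= oddM andbF.
have pk1 : 1 < p ^ k by rewrite -(expn0 p) ltn_exp2l ?prime_gt1.
have [t0 dt0] := sqrtN1_primeX k pP p4.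
pose t := t0 %% p ^ k.
have tl : t < p ^ k by rewrite ltn_pmod // ltnW.
have dt : p ^ k %| t ^ 2 + 1 by rewrite -dvdn_sqrD1_mod.
have t0' : 0 < t by case: (posnP t) dt => // ->; rewrite dvdn1 gtn_eqF.
have t_root : t \in sqrtN1_mod (p ^ k) by rewrite mem_sqrtN1_mod tl.
have t'_root : p ^ k - t \in sqrtN1_mod (p ^ k).
  rewrite mem_sqrtN1_mod dvdn_sqrD1_sub ?(ltnW tl) // andbT.
  by rewrite ltn_subrL t0' (ltnW pk1).
have t_neq : t != p ^ k - t.
  apply/eqP => e; have : odd (p ^ k) by rewrite oddX p_odd orbT.
  by rewrite -(subnK (ltnW tl)) -e addnn odd_double.
rewrite -(perm_size (_ : perm_eq [:: t; p ^ k - t] _)) //.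
apply: uniq_perm; rewrite ?sqrtN1_mod_uniq /= ?inE ?t_neq // => x.
rewrite !inE; apply/idP/idP => [/orP[]/eqP-> //|x_root].
case/orP: (sqrtN1_primeX_cases pP p_odd t_root x_root) => /eqP <-.
  by rewrite eqxx.
by rewrite addKn eqxx orbT.
Qed.

Lemma size_sqrtN1_mod n : 0 < n -> (forall p, p \in primes n -> p %% 4 = 1) ->
  size (sqrtN1_mod n) = 2 ^ size (primes n).
Proof.
elim/ltn_ind: n => n IH n0 n_primes.
have [n_le1|n1] := leqP n 1; first by rewrite (_ : n = 1) //; apply/eqP; rewrite eqn_leq n_le1.
have pP := pdiv_prime n1; set p := pdiv n in pP.
have pn : p \in primes n by rewrite mem_primes pP n0 pdiv_dvd.
have [m cop nE] := pfactor_coprime pP n0; set e := logn p n in nE.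
have e0 : 0 < e by rewrite logn_gt0.
have m0 : 0 < m by move: n0; rewrite nE muln_gt0 => /andP[].
have pe0 : 0 < p ^ e by rewrite expn_gt0 prime_gt0.
have primes_n : perm_eq (primes n) (p :: primes m).
  apply: uniq_perm; rewrite ?primes_uniq //= ?primes_uniq ?andbT.
    by rewrite mem_primes pP m0 /= -prime_coprime.
  by move=> q; rewrite nE primesM // (primesX _ e0) (primes_prime pP) !inE orbC.
have m_primes q : q \in primes m -> q %% 4 = 1.
  by move=> qm; apply: n_primes; rewrite (perm_mem primes_n) inE qm orbT.
rewrite (perm_size primes_n) expnS mulnC {1}nE size_sqrtN1_modM //.
- rewrite size_sqrtN1_primeX ?n_primes // IH //.
  by rewrite nE -{1}[m]muln1 ltn_pmul2l // -(expn0 p) ltn_exp2l ?prime_gt1.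
- by rewrite coprime_sym coprimeXl.
Qed.

Lemma sqrtN1_mod_sqr_primes l t p : l ^ 2 %| t ^ 2 + 1 -> p \in primes l -> p %% 4 = 1.
Proof.
move=> dt; rewrite mem_primes => /and3P[pP _ pl].
have p_odd : odd p.
  apply/negPn/(prime_oddPn pP) => p2; rewrite p2 in pl.
  have : 4 %| t ^ 2 + 1 by apply: dvdn_trans dt; rewrite -[4]/(2 ^ 2) dvdn_exp2r.
  rewrite /dvdn -modnDml -modnXm.
  by case: (t %% 4) (ltn_pmod t (isT : 0 < 4)) => [|[|[|[|]]]].
rewrite -prime_sqrtN1 //; exists t.
by apply: dvdn_trans dt; rewrite dvdn_exp.
Qed.

(** * Primitive representations of l^2 as a sum of two squares *)

Lemma Zp_nat_eq N a b : 1 < N -> ((a%:R : 'Z_N) == b%:R)%R = (a == b %[mod N]).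
Proof. by move=> N1; rewrite -val_eqE /= !val_Zp_nat. Qed.

Lemma Zp_nat_eq0 N a : 1 < N -> ((a%:R : 'Z_N) == 0)%R = (N %| a).
Proof. by move=> N1; rewrite -[0%R]/(0%:R)%R Zp_nat_eq // mod0n. Qed.

Lemma dvdn_sqrD_cong N t a b : N %| t ^ 2 + 1 -> a = t * b %[mod N] -> N %| a ^ 2 + b ^ 2.
Proof.
move=> dt ab; rewrite /dvdn -modnDml -modnXm ab modnXm modnDml.
have -> : (t * b) ^ 2 + b ^ 2 = (t ^ 2 + 1) * b ^ 2 by ring.
by rewrite -modnMml (eqP dt) mul0n mod0n.
Qed.

Lemma coprime_of_sqrtN1_cong N t x y : 0 < x -> N %| t ^ 2 + 1 ->
  x ^ 2 + y ^ 2 = N -> x = t * y %[mod N] -> coprime x y.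
Proof.
move=> x0 dt E cg; set g := gcdn x y.
have g0 : 0 < g by rewrite gcdn_gt0 x0.
have [a xa] : exists a, x = a * g by exists (x %/ g); rewrite divnK // dvdn_gcdl.
have [b yb] : exists b, y = b * g by exists (y %/ g); rewrite divnK // dvdn_gcdr.
set M := a ^ 2 + b ^ 2.
have NE : N = g * (g * M) by rewrite -E xa yb /M; ring.
have cg' : a = t * b %[mod g * M].
  apply/eqP; rewrite -(eqn_pmul2l g0) !muln_modr -NE.
  by apply/eqP; rewrite mulnC -xa cg yb; congr (_ %% _); ring.
have dM : g * M %| M by apply: dvdn_sqrD_cong (dvdn_trans _ dt) cg'; rewrite NE dvdn_mull.
have a0 : 0 < a by move: x0; rewrite xa muln_gt0 => /andP[].
have M0 : 0 < M by rewrite ltn_addr // expn_gt0 a0.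
move: (dvdn_leq M0 dM); rewrite -{2}[M]mul1n leq_pmul2r // => g1.
by rewrite /coprime -/g eqn_leq g1 g0.
Qed.

Lemma cauchy_schwarz2_eq x y x' y' N : x ^ 2 + y ^ 2 = N -> x' ^ 2 + y' ^ 2 = N ->
  N <= x * x' + y * y' -> x * y' = x' * y.
Proof.
move=> E E' le_N.
have : ((x * x' + y * y')%:Z ^+ 2 + ((x * y')%:Z - (x' * y)%:Z) ^+ 2 = (N * N)%:Z)%R.
  by rewrite -{1}E -E' -!natz !(natrM, natrD, natrX); ring.
nia.
Qed.

Lemma thue_lemma N (T : 'Z_N) u v : 1 < N -> N < u.+1 * v ->
  exists w : int * int,
    [/\ w != (0, 0)%R, (w.1%:~R == T * w.2%:~R)%R, `|w.1| <= u & `|w.2| < v].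
Proof.
move=> N1 Nuv; pose f (ab : 'I_u.+1 * 'I_v) : 'Z_N := (ab.1%:R + T * ab.2%:R)%R.
have /injectivePn[[a b] [[a' b'] ab_neq fab]] : ~~ injectiveb f.
  apply: contraL Nuv => /injectiveP/leq_card.
  by rewrite card_prod !card_ord Zp_cast // leqNgt.
exists (a%:Z - a'%:Z, b'%:Z - b%:Z)%R; split=> /=.
- apply: contra ab_neq => /eqP[/eqP + /eqP]; rewrite !subr_eq0.
  by move=> /eqP[/val_inj->] /eqP[/val_inj->].
- apply/eqP/subr0_eq; transitivity (f (a, b) - f (a', b'))%R.
    by rewrite /f /= !rmorphB /=; ring.
  by rewrite fab subrr.
- by have := ltn_ord a; have := ltn_ord a'; lia.
- by have := ltn_ord b; have := ltn_ord b'; lia.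
Qed.

Lemma iter_invariant (T S : Type) (f : T -> T) (P : T -> S) :
  (forall x, P (f x) = P x) -> forall n x, P (iter n f x) = P x.
Proof. by move=> fP; elim=> //= n IH x; rewrite fP IH. Qed.

Definition rot90 (v : int * int) : int * int := (- v.2, v.1)%R.

Definition sqnorm (v : int * int) : nat := `|v.1| ^ 2 + `|v.2| ^ 2.

Definition is_prim_rep (l : nat) (v : int * int) : bool :=
  (sqnorm v == l ^ 2) && coprime `|v.1| `|v.2|.

Lemma sqnorm_rot90 v : sqnorm (rot90 v) = sqnorm v.
Proof. by rewrite /sqnorm /= abszN addnC. Qed.

Lemma is_prim_rep_rot90 l v : is_prim_rep l (rot90 v) = is_prim_rep l v.
Proof. by rewrite /is_prim_rep sqnorm_rot90 /= abszN coprime_sym. Qed.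

Lemma is_prim_rep_nat l x y :
  is_prim_rep l (x%:Z, y%:Z)%R = (x ^ 2 + y ^ 2 == l ^ 2) && coprime x y.
Proof. by []. Qed.

Lemma is_prim_rep_neq0 l v : 0 < l -> is_prim_rep l v -> v != (0, 0)%R.
Proof.
move=> l0; apply: contraTneq => ->.
by rewrite /is_prim_rep /sqnorm /= eq_sym expn_eq0 gtn_eqF.
Qed.

Lemma rot90_sqrtN1 N (T : 'Z_N) : (T ^+ 2 = -1)%R -> forall v,
  ((rot90 v).1%:~R == T * (rot90 v).2%:~R)%R = (v.1%:~R == T * v.2%:~R)%R.
Proof.
move=> T2 [X Y]; rewrite /= mulrNz; apply/eqP/eqP => e.
  have := congr1 (GRing.mul T) e; rewrite mulrA -expr2 T2 mulN1r mulrN => TY.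
  by apply: oppr_inj; rewrite TY.
by rewrite e mulrA -expr2 T2 mulN1r.
Qed.

Lemma rot90_quadrant (v : int * int) : v != (0, 0)%R ->
  exists i x y, [/\ i < 4, 0 < x & v = iter i rot90 (x%:Z, y%:Z)%R].
Proof.
case: v => X Y nz.
have [X0|X0] := ltrP 0%R X; have [Y0|Y0] := lerP 0%R Y.
- by exists 0, `|X|, `|Y|; split=> //=; [lia | rewrite /rot90 /=; congr pair; lia].
- by exists 3, `|Y|, `|X|; split=> //=; [lia | rewrite /rot90 /=; congr pair; lia].
- have [eY|Y_neq0] := eqVneq Y 0%R; last first.
    by exists 1, `|Y|, `|X|; split=> //=; [lia | rewrite /rot90 /=; congr pair; lia].
  subst Y; exists 2, `|X|, 0; split=> //=; last by rewrite /rot90 /=; congr pair; lia.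
  by rewrite absz_gt0; apply: contraNneq nz => ->.
- have [->|X_neq0] := eqVneq X 0%R.
    by exists 3, `|Y|, 0; split=> //=; [lia | rewrite /rot90 /=; congr pair; lia].
  by exists 2, `|X|, `|Y|; split=> //=; [lia | rewrite /rot90 /=; congr pair; lia].
Qed.

Lemma iter_rot90_inj i j x y x' y' : i < 4 -> j < 4 -> 0 < x -> 0 < x' ->
  iter i rot90 (x%:Z, y%:Z)%R = iter j rot90 (x'%:Z, y'%:Z)%R -> [/\ i = j, x = x' & y = y'].
Proof.
move=> + + x0 x0'.
by case: i => [|[|[|[|i]]]] // _; case: j => [|[|[|[|j]]]] // _ /= [e1 e2]; split; lia.
Qed.

Definition prim_reps (l : nat) : seq (nat * nat) :=
  [seq xy <- [seq (x, y) | x <- iota 1 l, y <- iota 0 l.+1] |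
     (xy.1 ^ 2 + xy.2 ^ 2 == l ^ 2) && coprime xy.1 xy.2].

Lemma prim_reps_uniq l : uniq (prim_reps l).
Proof.
rewrite filter_uniq // allpairs_uniq ?iota_uniq //.
by move=> [a b] [c d] _ _ /= [-> ->].
Qed.

Lemma mem_prim_reps l x y :
  ((x, y) \in prim_reps l) = [&& 0 < x, x ^ 2 + y ^ 2 == l ^ 2 & coprime x y].
Proof.
rewrite mem_filter; apply/andP/and3P => [[/andP[E c] xy]|[x0 /eqP E c]].
  by split=> //; case: (allpairsP xy) => -[a b] [] /[!mem_iota] /andP[a1 _] _ [-> _].
split; first by rewrite /= E eqxx.
have xl : x <= l by rewrite -(@leq_exp2r _ _ 2) // -E leq_addr.
have yl : y <= l by rewrite -(@leq_exp2r _ _ 2) // -E leq_addl.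
by apply: allpairs_f; rewrite mem_iota; lia.
Qed.

Lemma prim_reps_unit l x y : 1 < l -> (x, y) \in prim_reps l ->
  ((y%:R : 'Z_(l ^ 2)) \is a GRing.unit)%R.
Proof.
move=> l1; rewrite mem_prim_reps unitZpE ?(ltnW (ltn_expl 2 l1)) // => /and3P[_ /eqP <- c].
by rewrite coprime_sym addnC -mulnn /coprime gcdnMDl -/(coprime _ _) coprimeXr // coprime_sym.
Qed.

Definition rep_sqrtN1 (l : nat) (xy : nat * nat) : nat :=
  (xy.1%:R / xy.2%:R : 'Z_(l ^ 2))%R.

Lemma rep_sqrtN1_sqr l x y : 1 < l -> (x, y) \in prim_reps l ->
  (((x%:R / y%:R) ^+ 2 + 1 : 'Z_(l ^ 2)) = 0)%R.
Proof.
move=> l1 xy_rep; have /unitrX yU := prim_reps_unit l1 xy_rep.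
move: xy_rep; rewrite mem_prim_reps => /and3P[_ /eqP E _].
rewrite expr_div_n -[in X in (_ + X)%R](divrr (yU 2)) -mulrDl.
by rewrite -!natrX -natrD E pchar_Zp ?mul0r // (ltnW (ltn_expl 2 l1)).
Qed.

Lemma rep_sqrtN1_mem l xy : 1 < l -> xy \in prim_reps l ->
  rep_sqrtN1 l xy \in sqrtN1_mod (l ^ 2).
Proof.
case: xy => x y l1 xy_rep; have N1 := ltnW (ltn_expl 2 l1).
rewrite mem_sqrtN1_mod -(Zp_nat_eq0 _ N1) natrD natrX natr_Zp rep_sqrtN1_sqr //.
by rewrite eqxx andbT -[X in _ < X](Zp_cast N1) ltn_ord.
Qed.

Lemma rep_sqrtN1_inj l : 1 < l -> {in prim_reps l &, injective (rep_sqrtN1 l)}.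
Proof.
move=> l1 [x y] [x' y'] xy_rep xy'_rep /val_inj /= e.
have N1 := ltnW (ltn_expl 2 l1).
have dot : l ^ 2 %| x * x' + y * y'.
  rewrite -(Zp_nat_eq0 _ N1) natrD !natrM.
  rewrite -{1}(divrK (prim_reps_unit l1 xy_rep) (x%:R)%R).
  rewrite -{1}(divrK (prim_reps_unit l1 xy'_rep) (x'%:R)%R) -e.
  rewrite (_ : (_ * _ + _ = ((x%:R / y%:R) ^+ 2 + 1) * (y%:R * y'%:R))%R); last by ring.
  by rewrite rep_sqrtN1_sqr // mul0r.
move: xy_rep xy'_rep; rewrite !mem_prim_reps => /and3P[x0 /eqP E c] /and3P[x0' /eqP E' c'].
have cross : x * y' = x' * y.
  apply: cauchy_schwarz2_eq E E' (dvdn_leq _ dot).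
  by rewrite ltn_addr // muln_gt0 x0 x0'.
have ex : x = x'.
  apply/eqP; rewrite eqn_dvd; apply/andP; split.
    by rewrite -(Gauss_dvdl x' c) -cross dvdn_mulr.
  by rewrite -(Gauss_dvdl x c') cross dvdn_mulr.
by move: cross; rewrite ex => /eqP; rewrite eqn_mul2l gtn_eqF // => /eqP->.
Qed.

Lemma rep_sqrtN1_surj l t : 1 < l -> t \in sqrtN1_mod (l ^ 2) ->
  exists2 xy, xy \in prim_reps l & rep_sqrtN1 l xy = t.
Proof.
move=> l1; rewrite mem_sqrtN1_mod => /andP[tl dt].
have N1 := ltnW (ltn_expl 2 l1).
pose T : 'Z_(l ^ 2) := (t%:R)%R.
have T2 : (T ^+ 2 = -1)%R.
  by apply/eqP; rewrite -addr_eq0 -natrX -(natrD _ _ 1) Zp_nat_eq0.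
have lt_l : l ^ 2 < l.+1 * l by rewrite -mulnn ltn_pmul2r ?(ltnW l1).
have [w [w_nz wT wX wY]] := thue_lemma T N1 lt_l.
have [i [x [y [_ x0 ew]]]] := rot90_quadrant w_nz.
have xT : (x%:R == T * y%:R)%R.
  move: wT; rewrite ew (iter_invariant (P := fun v : int * int => v.1%:~R == T * v.2%:~R)%R
    (rot90_sqrtN1 T2)); exact: id.
have xy_cong : x = t * y %[mod l ^ 2] by apply/eqP; rewrite -Zp_nat_eq // natrM (eqP xT).
have E : x ^ 2 + y ^ 2 = l ^ 2.
  have : x ^ 2 + y ^ 2 = sqnorm w by rewrite ew (iter_invariant sqnorm_rot90).
  rewrite /sqnorm => sqn.
  have lt2 : x ^ 2 + y ^ 2 < l ^ 2 + l ^ 2.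
    by rewrite sqn -addnS leq_add // ?leq_exp2r ?ltn_exp2r.
  have pos : 0 < x ^ 2 + y ^ 2 by rewrite ltn_addr // expn_gt0 x0.
  move: (dvdn_sqrD_cong dt xy_cong) lt2 pos; move: (x ^ 2 + y ^ 2) (l ^ 2) => n L.
  by case/dvdnP => [[|[|c]] ->]; rewrite ?mulSn; lia.
have xy_rep : (x, y) \in prim_reps l.
  by rewrite mem_prim_reps x0 E eqxx (coprime_of_sqrtN1_cong x0 dt E xy_cong).
exists (x, y) => //; rewrite /rep_sqrtN1 [X in nat_of_ord X](_ : _ = T).
  by rewrite /T val_Zp_nat // modn_small.
by rewrite /= (eqP xT) mulrK ?(prim_reps_unit l1 xy_rep).
Qed.

Lemma size_prim_reps l : 1 < l -> size (prim_reps l) = size (sqrtN1_mod (l ^ 2)).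
Proof.
move=> l1; rewrite -(size_map (rep_sqrtN1 l)); apply/perm_size/uniq_perm.
- by rewrite map_inj_in_uniq ?prim_reps_uniq //; apply: rep_sqrtN1_inj.
- exact: sqrtN1_mod_uniq.
move=> t; apply/mapP/idP => [[xy xy_rep ->]|/(rep_sqrtN1_surj l1)[xy xy_rep <-]].
  exact: rep_sqrtN1_mem.
by exists xy.
Qed.

Definition int_reps (l : nat) : seq (int * int) :=
  [seq iter i rot90 (xy.1%:Z, xy.2%:Z)%R | i <- iota 0 4, xy <- prim_reps l].

Lemma int_reps_uniq l : uniq (int_reps l).
Proof.
apply: allpairs_uniq; rewrite ?iota_uniq ?prim_reps_uniq // => p p' /allpairsP + /allpairsP.
move=> -[[i [x y]] [+ + ->]] [[j [x' y']] [+ + ->]] /=.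
rewrite !mem_iota !mem_prim_reps => /andP[_ i4] /and3P[x0 _ _] /andP[_ j4] /and3P[x0' _ _].
by case/iter_rot90_inj => // -> -> ->.
Qed.

Lemma size_int_reps l : size (int_reps l) = 4 * size (prim_reps l).
Proof. by rewrite size_allpairs size_iota. Qed.

Lemma mem_int_reps l v : 0 < l -> (v \in int_reps l) = is_prim_rep l v.
Proof.
move=> l0; apply/idP/idP => [v_in | v_rep].
  case: (allpairsP v_in) => -[i [x y]] [_ + ->] /=; rewrite mem_prim_reps => /and3P[_ E c].
  by rewrite (iter_invariant (is_prim_rep_rot90 l)) is_prim_rep_nat E.
have [i [x [y [i4 x0 ev]]]] := rot90_quadrant (is_prim_rep_neq0 l0 v_rep).
apply/allpairsP; exists (i, (x, y)); split; [by rewrite mem_iota | | by []].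
move: v_rep; rewrite ev (iter_invariant (is_prim_rep_rot90 l)) is_prim_rep_nat.
by rewrite mem_prim_reps x0.
Qed.

(** * Orthogonal 2x2 rational matrices *)

Local Open Scope ring_scope.

Definition mx2 (R : Type) (a b c d : R) : 'M[R]_2 :=
  \matrix_(i, j) if i == ord0 then (if j == ord0 then a else b) else (if j == ord0 then c else d).

Lemma ord2P (i : 'I_2) : i = 0 \/ i = 1.
Proof. by case: i => [[|[|//]]] ?; [left|right]; apply: val_inj. Qed.

Lemma mx2_eta (R : Type) (A : 'M[R]_2) : A = mx2 (A 0 0) (A 0 1) (A 1 0) (A 1 1).
Proof. by apply/matrixP => i j; rewrite mxE; case: (ord2P i) (ord2P j) => -> [] ->. Qed.

Lemma mx2_inj (R : Type) (a b c d a' b' c' d' : R) :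
  mx2 a b c d = mx2 a' b' c' d' -> [/\ a = a', b = b', c = c' & d = d'].
Proof.
by move/matrixP=> e; split; [have := e 0 0 | have := e 0 1 | have := e 1 0 | have := e 1 1];
  rewrite !mxE.
Qed.

Lemma mx2_mulmx_tr (R : comNzRingType) (a b c d : R) :
  mx2 a b c d *m (mx2 a b c d)^T = mx2 (a * a + b * b) (a * c + b * d) (c * a + d * b) (c * c + d * d).
Proof.
apply/matrixP => i j; rewrite !mxE big_ord_recl big_ord1 !mxE.
by case: (ord2P i) (ord2P j) => -> [] ->.
Qed.

Lemma scalar_mx2 (R : nmodType) (a : R) : a%:M = mx2 a 0 0 a :> 'M_2.
Proof. by apply/matrixP => i j; rewrite !mxE; case: (ord2P i) (ord2P j) => -> [] ->. Qed.

(* [orth2 true a c] is the rotation and [orth2 false a c] the reflection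
   with first column (a, c). *)
Definition orth2 (R : zmodType) (s : bool) (a c : R) : 'M[R]_2 :=
  mx2 a (if s then - c else c) c (if s then a else - a).

Lemma orth2_mulmx_tr (R : comNzRingType) s (a c : R) :
  orth2 s a c *m (orth2 s a c)^T = (a ^+ 2 + c ^+ 2)%:M.
Proof. by rewrite mx2_mulmx_tr scalar_mx2; case: s; congr mx2; ring. Qed.

Lemma orthogonal2_orth2 (R : idomainType) (Q : 'M[R]_2) :
  Q *m Q^T = 1%:M -> exists s, Q = orth2 s (Q 0 0) (Q 1 0).
Proof.
rewrite {1 2}(mx2_eta Q) mx2_mulmx_tr scalar_mx2.
set a := Q 0 0; set b := Q 0 1; set c := Q 1 0; set d := Q 1 1.
move=> /(@mx2_inj R) [e00 e01 _ e11]; set k := a * d - b * c.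
have hc : c = - k * b.
  apply/eqP; rewrite -subr_eq0.
  have -> : c - - k * b = c * (1 - (a * a + b * b)) + a * (a * c + b * d) by rewrite /k; ring.
  by rewrite e00 e01 subrr !mulr0 addr0.
have hd : d = k * a.
  apply/eqP; rewrite -subr_eq0.
  have -> : d - k * a = d * (1 - (a * a + b * b)) + b * (a * c + b * d) by rewrite /k; ring.
  by rewrite e00 e01 subrr !mulr0 addr0.
have /eqP : k ^+ 2 = 1.
  have : c * c + d * d = k ^+ 2 * (a * a + b * b) by rewrite hc hd; ring.
  by rewrite e11 e00 mulr1.
rewrite sqrf_eq1 => /orP[] /eqP k1; rewrite k1 in hc hd.
- by exists true; rewrite {1}(mx2_eta Q) /orth2 -/a -/b -/c -/d hc hd; congr mx2; ring.
- by exists false; rewrite {1}(mx2_eta Q) /orth2 -/a -/b -/c -/d hc hd; congr mx2; ring.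
Qed.

Lemma orth2_inj (R : numDomainType) s s' (a c a' c' : R) : (a, c) != (0, 0) ->
  orth2 s a c = orth2 s' a' c' -> [/\ s = s', a = a' & c = c'].
Proof.
move=> nz /(@mx2_inj R) [ea ebc ec ead]; subst a' c'; split=> //.
case: s s' ebc ead nz => [] [] //= /eqP ebc /eqP ead.
- by rewrite eqNr in ebc; rewrite eq_sym eqNr in ead; rewrite (eqP ebc) (eqP ead) eqxx.
- by rewrite eq_sym eqNr in ebc; rewrite eqNr in ead; rewrite (eqP ebc) (eqP ead) eqxx.
Qed.

Lemma Qint_div_natE (z : int) (d : nat) : (0 < d)%N ->
  ((z%:~R / d%:R : rat) \is a Num.int) = (d %| `|z|)%N.
Proof.
move=> d0; have dR : (d%:R : rat) != 0 by rewrite pnatr_eq0 -lt0n.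
apply/idP/idP => [/intrP[w e]|dz]; last by rewrite -[d%:R]/((d%:Z)%:~R) Qint_dvdz // dvdzE.
have -> : z = w * d by apply: (@intr_inj rat); rewrite intrM -e divfK.
by rewrite abszM absz_nat dvdn_mull.
Qed.

Lemma Qint_scale_div (k : nat) (z : int) (d : nat) : (0 < d)%N ->
  ((k%:R * (z%:~R / d%:R) : rat) \is a Num.int) = (d %| k * `|z|)%N.
Proof.
by move=> d0; rewrite mulrA -[k%:R]/((k%:Z)%:~R) -intrM Qint_div_natE // abszM absz_nat.
Qed.

Lemma int_mx_orth2 (l k : nat) s (X Y : int) : (0 < l)%N ->
  int_mx (k%:R *: orth2 s (X%:~R / l%:R) (Y%:~R / l%:R)) <-> (l %| k * gcdn `|X| `|Y|)%N.
Proof.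
move=> l0; split=> [int_Q | dvd_l i j].
  have := int_Q 0 0; have := int_Q 1 0; rewrite !mxE /= !Qint_scale_div // => dY dX.
  by rewrite muln_gcdr dvdn_gcd dX dY.
by rewrite !mxE; case: (ord2P i) (ord2P j) => -> [] -> /=; case: s;
  rewrite ?mulrN ?rpredN Qint_scale_div // (dvdn_trans dvd_l) // muln_gcdr ?dvdn_gcdl ?dvdn_gcdr.
Qed.

Lemma has_level_orth2 (l : nat) s (X Y : int) : (0 < l)%N -> (gcdn `|X| `|Y| %| l)%N ->
  has_level (orth2 s (X%:~R / l%:R) (Y%:~R / l%:R)) l <-> coprime `|X| `|Y|.
Proof.
move=> l0 g_l; split=> [[_ [_ min_l]] | cop].
  apply/negPn/negP => ncop; have g0 := dvdn_gt0 l0 g_l.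
  have g1 : (1 < gcdn `|X| `|Y|)%N by move: g0 ncop; rewrite /coprime; case: gcdn => [|[]].
  apply: (min_l (l %/ gcdn `|X| `|Y|)%N); rewrite ?int_mx_orth2 ?divnK ?ltn_Pdiv //.
  by rewrite divn_gt0 // dvdn_leq.
split=> //; split=> [|m m0 ml]; first by rewrite int_mx_orth2 ?dvdn_mulr.
by rewrite int_mx_orth2 // (eqP cop) muln1 => /(dvdn_leq m0); rewrite leqNgt ml.
Qed.

Lemma sqnormE (v : int * int) : (sqnorm v)%:Z = v.1 ^+ 2 + v.2 ^+ 2.
Proof. by rewrite /sqnorm PoszD -!abszX !gez0_abs ?sqr_ge0. Qed.

Lemma sqnorm_ratE (l : nat) (v : int * int) : (0 < l)%N ->
  (sqnorm v == l ^ 2)%N = ((v.1%:~R / l%:R) ^+ 2 + (v.2%:~R / l%:R) ^+ 2 == 1 :> rat).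
Proof.
move=> l0; have lR : (l%:R : rat) != 0 by rewrite pnatr_eq0 -lt0n.
rewrite -eqz_nat sqnormE -(eqr_int rat) rmorphD !rmorphXn /= -pmulrn natrX !expr_div_n -mulrDl.
by rewrite -[RHS](inj_eq (mulIf (expf_neq0 2 lR))) divfK ?expf_neq0 // mul1r.
Qed.

Lemma gcdn_dvd_sqnorm (l : nat) (v : int * int) : sqnorm v = (l ^ 2)%N ->
  (gcdn `|v.1| `|v.2| %| l)%N.
Proof.
move=> E; rewrite -(@dvdn_pexp2r _ _ 2) // -E.
by rewrite dvdn_add // dvdn_exp2r ?dvdn_gcdl ?dvdn_gcdr.
Qed.

Lemma in_O_orth2 (l : nat) Q : (0 < l)%N -> in_O l Q <->
  exists s (v : int * int), is_prim_rep l v /\ Q = orth2 s (v.1%:~R / l%:R) (v.2%:~R / l%:R).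
Proof.
move=> l0; have lR : (l%:R : rat) != 0 by rewrite pnatr_eq0 -lt0n.
split=> [[orthQ levQ] | [s [v [/andP[/eqP E cop] ->]]]]; last first.
  split; last by rewrite has_level_orth2 // gcdn_dvd_sqnorm.
  by move: E => /eqP; rewrite sqnorm_ratE // => /eqP E; rewrite /orthogonal_mx orth2_mulmx_tr E.
have [s eQ] := orthogonal2_orth2 orthQ; have [_ [intQ _]] := levQ.
have entry_div i j : exists X : int, Q i j = X%:~R / l%:R.
  by have /intrP[X eX] := intQ i j; exists X; rewrite -eX mxE mulrC mulKf.
have [[X eX] [Y eY]] := (entry_div 0 0, entry_div 1 0).
have QXY : Q = orth2 s (X%:~R / l%:R) (Y%:~R / l%:R) by rewrite {1}eQ eX eY.
have E : sqnorm (X, Y) = (l ^ 2)%N.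
  apply/eqP; rewrite sqnorm_ratE //=.
  by move: orthQ; rewrite /orthogonal_mx QXY orth2_mulmx_tr !scalar_mx2 => /(@mx2_inj rat)[->].
exists s, (X, Y); split => //; rewrite /is_prim_rep E eqxx /=.
by rewrite -(has_level_orth2 s l0 (gcdn_dvd_sqnorm E)) -QXY.
Qed.

Definition orth_mxs (l : nat) : seq 'M[rat]_2 :=
  [seq orth2 s (v.1%:~R / l%:R) (v.2%:~R / l%:R) | s <- [:: true; false], v <- int_reps l].

Lemma orth_mxs_uniq l : (0 < l)%N -> uniq (orth_mxs l).
Proof.
move=> l0; have lR : (l%:R : rat) != 0 by rewrite pnatr_eq0 -lt0n.
have div_inj : injective (fun z : int => z%:~R / l%:R : rat).
  by move=> z z' /(mulIf (invr_neq0 lR)) /intr_inj.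
apply: allpairs_uniq; rewrite ?int_reps_uniq // => p p' /allpairsP + _.
move=> -[[s [X Y]] [_ + ->]] /=; rewrite mem_int_reps // => XY_rep.
have nz : (X%:~R / l%:R, Y%:~R / l%:R) != (0, 0) :> rat * rat.
  rewrite xpair_eqE !mulf_eq0 invr_eq0 (negbTE lR) !orbF !intr_eq0 -xpair_eqE.
  exact: is_prim_rep_neq0 l0 XY_rep.
by case: p' => s' [X' Y'] /= /(orth2_inj nz) [-> /div_inj -> /div_inj ->].
Qed.

Lemma size_orth_mxs l : size (orth_mxs l) = (8 * size (prim_reps l))%N.
Proof. by rewrite size_allpairs size_int_reps mulnA. Qed.

Lemma mem_orth_mxs l Q : (0 < l)%N -> Q \in orth_mxs l <-> in_O l Q.
Proof.
move=> l0; rewrite in_O_orth2 //; split=> [/allpairsP[[s v] [_ v_in ->]] | [s [v [v_rep ->]]]].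
  by exists s, v; rewrite -mem_int_reps.
by apply/allpairsP; exists (s, v); rewrite mem_int_reps //; case: s.
Qed.

Theorem proposition3p1 (l : nat) (hl : (2 <= l)%N) :
  ((exists Q : 'M[rat]_2, in_O l Q) <->
     (forall p : nat, p \in primes l -> p %% 4 = 1)%N)
  /\
  ((forall p : nat, p \in primes l -> p %% 4 = 1)%N ->
     exists s : seq 'M[rat]_2,
       uniq s /\ (forall Q : 'M[rat]_2, Q \in s <-> in_O l Q) /\
       size s = (2 ^ (size (primes l) + 3))%N).
Proof.
have l0 : (0 < l)%N := ltnW hl.
have size_O : size (orth_mxs l) = (8 * size (sqrtN1_mod (l ^ 2)))%N.
  by rewrite size_orth_mxs size_prim_reps.
have size_roots : (forall p, p \in primes l -> p %% 4 = 1)%N ->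
    size (sqrtN1_mod (l ^ 2)) = (2 ^ size (primes l))%N.
  by move=> l_primes; rewrite size_sqrtN1_mod ?expn_gt0 ?l0 // primesX.
split; last first.
  move=> l_primes; exists (orth_mxs l); split; first exact: orth_mxs_uniq.
  split=> [Q|]; first exact: mem_orth_mxs.
  by rewrite size_O size_roots // expnD mulnC.
split=> [[Q /(mem_orth_mxs Q l0) Q_in] p | l_primes].
  case E: (sqrtN1_mod (l ^ 2)) size_O => [|t ts]; first by move/size0nil=> E'; rewrite E' in Q_in.
  have := mem_head t ts; rewrite -E mem_sqrtN1_mod => /andP[_ dt] _.
  exact: sqrtN1_mod_sqr_primes dt.
have : (0 < size (orth_mxs l))%N by rewrite size_O size_roots // muln_gt0 expn_gt0.
case E: (orth_mxs l) => [//|Q s] _; exists Q.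
by apply/(mem_orth_mxs Q l0); rewrite E mem_head.
Qed.
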